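(* For every $i\in[d]$, all $r\in[m]$, any constant $c_1\ge10$, and every $x_{1:i}$ with $\|x_{1:i}\|_2\le\frac12$, with probability at least $1-\frac1{c_1}$ over the random initialization, the change in weights after $t$ SGD steps with learning rate $\eta$ satisfies $$\|w^{(t)}_{i,r}\|_2\le\eta\bar\Lambda t,\qquad |b^{(t)}_{i,r}|\le\eta\bar\Lambda t,\qquad\text{where }\bar\Lambda=6c_1\epsilon_a\sqrt{2\log m}.$$
   Context: UNF setting. Fix $d\ge1$, $m\ge2$, $\epsilon_a>0$, $Q\ge1$. For $\|x_{1:i}\|_2\le1$, $\hat x_{1:i}=(x_1,\dots,x_i,\sqrt{1-\|x_{1:i}\|_2^2})$. $\sigma(u)=\max\{u,0\}$ with $\sigma'(u)=\mathbf 1\{u\ge0\}$; $\phi(u)=e^u$ ($u<0$), $u+1$ ($u\ge0$). Frozen random initial parameters $a_{i,r}\sim\mathcal N(0,\epsilon_a^2)$, $\bar w_{i,r}\sim\mathcal N(0,\frac1mI_{i+1})$, $\bar b_{i,r}\sim\mathcal N(0,\frac1m)$, independent. Offsets $\theta_i=(w_{i,r},b_{i,r})_{r\in[m]}$, $\theta^{(0)}=0$. $N(x_{1:i};\theta_i)=\sum_ra_{i,r}\sigma(\langle\bar w_{i,r}+w_{i,r},\hat x_{1:i}\rangle+\bar b_{i,r}+b_{i,r})$, $\frac{\partial f_i}{\partial x_i}=\phi(N(\cdot;\theta_i))$. Quadrature: $\Delta_{x_i}=(x_i+1)/Q$, $q^{(j)}_i=(x_1,\dots,x_{i-1},-1+j\Delta_{x_i})$.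 Approximate loss $\tilde L(\nabla f,x)=\sum_{i}\big(\sum_{j=1}^Q\Delta_{x_i}\phi(N(q^{(j)}_i;\theta_i))-\log\phi(N(x_{1:i};\theta_i))\big)$. SGD: $\theta^{(t+1)}=\theta^{(t)}-\eta\nabla_\theta\tilde L(\nabla f^{(t)},x^{(t)})$ with $x^{(t)}$ drawn uniformly from a training set of points in the unit ball, where $f^{(t)}$ uses $\theta^{(t)}$; $w^{(t)}_{i,r},b^{(t)}_{i,r}$ are the components of $\theta^{(t)}$. *)

From HB Require Import structures.
From mathcomp Require Import all_boot all_order all_algebra.
From mathcomp Require Import all_classical all_reals all_analysis.
Set Implicit Arguments.
Unset Strict Implicit.
Unset Printing Implicit Defensive.
Import Order.TTheory GRing.Theory Num.Theory.
Local Open Scope classical_set_scope.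
Local Open Scope ring_scope.

(* Index convention: the paper's block i in [d] (1-based) is k : 'I_d with
   i = k.+1.  Thus x_{1:i} : 'rV_(k.+1) and \hat x_{1:i}, w_{i,r} : 'rV_(k.+2). *)

Section Net.
Variable R : realType.

Definition norm2 n (v : 'rV[R]_n) : R := Num.sqrt (\sum_(j < n) v 0 j ^+ 2).

Definition hatv n (x : 'rV[R]_n.+1) : 'rV[R]_n.+2 :=
  \row_(j < n.+2) (if (j < n.+1)%N then x 0 (inord j)
                   else Num.sqrt (1 - norm2 x ^+ 2)).

Definition prefix d (k : 'I_d) (x : 'rV[R]_d) : 'rV[R]_k.+1 :=
  \row_(j < k.+1) x 0 (widen_ord (ltn_ord k) j).

Definition sigma (u : R) : R := Num.max u 0.
Definition dsigma (u : R) : R := if 0 <= u then 1 else 0.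
Definition phi (u : R) : R := if u < 0 then expR u else u + 1.
Definition dphi (u : R) : R := if u < 0 then expR u else 1.

(* Offsets of block k: theta_k r = (w_{k,r}, b_{k,r}) *)
Definition block (n m : nat) := 'I_m -> 'rV[R]_n * R.

Section Block.
Variables (n m : nat).
Variables (a : 'I_m -> R) (wb : 'I_m -> 'rV[R]_n) (bb : 'I_m -> R).

Definition preact (th : block n m) (r : 'I_m) (z : 'rV[R]_n) : R :=
  \sum_(j < n) (wb r 0 j + (th r).1 0 j) * z 0 j + bb r + (th r).2.

Definition Nnet (th : block n m) (z : 'rV[R]_n) : R :=
  \sum_(r < m) a r * sigma (preact th r z).
End Block.

Section Loss.
Variables (k m Q : nat).
Variables (a : 'I_m -> R) (wb : 'I_m -> 'rV[R]_k.+2) (bb : 'I_m -> R).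

Definition Delta (x : 'rV[R]_k.+1) : R := (x 0 ord_max + 1) / Q%:R.

Definition quadpt (x : 'rV[R]_k.+1) (j : nat) : 'rV[R]_k.+1 :=
  \row_(l < k.+1) (if (l < k)%N then x 0 l else -1 + j%:R * Delta x).

Definition Ltilde_i (th : block k.+2 m) (x : 'rV[R]_k.+1) : R :=
  \sum_(1 <= j < Q.+1) Delta x * phi (Nnet a wb bb th (hatv (quadpt x j)))
  - ln (phi (Nnet a wb bb th (hatv x))).

Definition gradw (th : block k.+2 m) (x : 'rV[R]_k.+1) (r : 'I_m) : 'rV[R]_k.+2 :=
  \sum_(1 <= j < Q.+1)
     (Delta x * dphi (Nnet a wb bb th (hatv (quadpt x j))) * a r
        * dsigma (preact wb bb th r (hatv (quadpt x j)))) *: hatv (quadpt x j)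
  - (dphi (Nnet a wb bb th (hatv x)) / phi (Nnet a wb bb th (hatv x)) * a r
        * dsigma (preact wb bb th r (hatv x))) *: hatv x.

Definition gradb (th : block k.+2 m) (x : 'rV[R]_k.+1) (r : 'I_m) : R :=
  \sum_(1 <= j < Q.+1)
     (Delta x * dphi (Nnet a wb bb th (hatv (quadpt x j))) * a r
        * dsigma (preact wb bb th r (hatv (quadpt x j))))
  - (dphi (Nnet a wb bb th (hatv x)) / phi (Nnet a wb bb th (hatv x)) * a r
        * dsigma (preact wb bb th r (hatv x))).
End Loss.

Section SGD.
Variables (d m Q : nat).
Variables (a : 'I_d -> 'I_m -> R) (wb : forall k : 'I_d, 'I_m -> 'rV[R]_k.+2)
          (bb : 'I_d -> 'I_m -> R).

Definition params := forall k : 'I_d, block k.+2 m.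

Definition Ltilde (th : params) (x : 'rV[R]_d) : R :=
  \sum_(k < d) Ltilde_i Q (a k) (wb k) (bb k) (th k) (prefix k x).

(* gradient of Ltilde w.r.t. theta: the k-th summand only depends on theta_k *)
Definition gradL (th : params) (x : 'rV[R]_d) : params :=
  fun k r => (gradw Q (a k) (wb k) (bb k) (th k) (prefix k x) r,
              gradb Q (a k) (wb k) (bb k) (th k) (prefix k x) r).

Fixpoint sgd (eta : R) (xs : nat -> 'rV[R]_d) (t : nat) : params :=
  match t with
  | 0 => fun k r => (0, 0)
  | t'.+1 => let th := sgd eta xs t' in
             fun k r => ((th k r).1 - eta *: (gradL th (xs t') k r).1,
                         (th k r).2 - eta * (gradL th (xs t') k r).2)
  end.
End SGD.

End Net.

Inductive init_idx (d m : nat) : Type :=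
| IA : 'I_d -> 'I_m -> init_idx d m
| IW : forall k : 'I_d, 'I_m -> 'I_k.+2 -> init_idx d m
| IB : 'I_d -> 'I_m -> init_idx d m.
Arguments IA {d m} k r.
Arguments IW {d m} k r j.
Arguments IB {d m} k r.

Section Prob.
Local Open Scope ereal_scope.
Context {R : realType} {dsp : measure_display} {T : measurableType dsp}.

Definition mutually_independent (I : Type) (P : probability T R)
    (X : I -> T -> R) : Prop :=
  forall (n : nat) (f : 'I_n -> I), injective f ->
  forall B : 'I_n -> set R, (forall l, measurable (B l)) ->
  P (\bigcap_(l in [set: 'I_n]) (X (f l) @^-1` B l))
  = \prod_(l < n) P (X (f l) @^-1` B l).

Definition gaussian0 (P : probability T R) (X : T -> R) (v : R) : Prop :=
  measurable_fun setT X /\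
  forall B : set R, measurable B -> P (X @^-1` B) = normal_prob 0 (Num.sqrt v) B.
End Prob.

Definition init_a {R : realType} {T : Type} d m (X : init_idx d m -> T -> R) (w : T)
  : 'I_d -> 'I_m -> R := fun k r => X (IA k r) w.
Definition init_w {R : realType} {T : Type} d m (X : init_idx d m -> T -> R) (w : T)
  : forall k : 'I_d, 'I_m -> 'rV[R]_k.+2 := fun k r => \row_j X (IW k r j) w.
Definition init_b {R : realType} {T : Type} d m (X : init_idx d m -> T -> R) (w : T)
  : 'I_d -> 'I_m -> R := fun k r => X (IB k r) w.

(* Since phi'/phi, phi' and sigma' all take values in [0, 1], each gradient of
   the approximate loss with respect to (w_{i,r}, b_{i,r}) is bounded by
   6 |a_{i,r}|: the quadrature weights add up to x_i + 1 <= 2 and the lifted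
   points have norm at most 2.  Hence, deterministically, both offsets stay
   below 6 eta |a_{i,r}| t after t steps.  It remains to have
   |a_{i,r}| <= c1 eps_a sqrt (2 log m), which fails with probability at most
   2 exp (-c1^2 log m) <= 1/c1 by the Gaussian tail bound
   P(|a| > s) <= 2 exp (-s^2 / (2 eps_a^2)). *)

From Pilot Require Import Defs.
From HB Require Import structures.
From mathcomp Require Import all_boot all_order all_algebra.
From mathcomp Require Import all_classical all_reals all_analysis.
From mathcomp Require Import measurable_realfun.
From mathcomp.algebra_tactics Require Import ring lra.
Import Order.TTheory GRing.Theory Num.Theory.
Set Implicit Arguments.
Unset Strict Implicit.
Unset Printing Implicit Defensive.
Local Open Scope classical_set_scope.
Local Open Scope ring_scope.

Section EuclideanNorm.
Variable R : realType.

Definition sumsq n (v : 'rV[R]_n) : R := \sum_(j < n) v 0 j ^+ 2.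

Lemma sumsq_ge0 n (v : 'rV[R]_n) : 0 <= sumsq v.
Proof. by apply: sumr_ge0 => j _; rewrite sqr_ge0. Qed.

Lemma sqr_coord_le_sumsq n (v : 'rV[R]_n) j : v 0 j ^+ 2 <= sumsq v.
Proof.
rewrite /sumsq (bigD1 j) //= lerDl.
by apply: sumr_ge0 => i _; rewrite sqr_ge0.
Qed.

Lemma abs_coord_le_norm2 n (v : 'rV[R]_n) j : `|v 0 j| <= norm2 v.
Proof. by rewrite -sqrtr_sqr ler_sqrt ?sumsq_ge0 ?sqr_coord_le_sumsq. Qed.

Lemma norm2_ge0 n (v : 'rV[R]_n) : 0 <= norm2 v.
Proof. exact: sqrtr_ge0. Qed.

Lemma sqr_norm2 n (v : 'rV[R]_n) : norm2 v ^+ 2 = sumsq v.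
Proof. by rewrite sqr_sqrtr // sumsq_ge0. Qed.

Lemma norm2_le n (v : 'rV[R]_n) c : 0 <= c -> sumsq v <= c ^+ 2 -> norm2 v <= c.
Proof. by move=> c0 h; rewrite -(ler_pXn2r (n := 2)) ?sqr_norm2 ?nnegrE ?norm2_ge0. Qed.

Lemma sumsq_le n (v : 'rV[R]_n) c : norm2 v <= c -> sumsq v <= c ^+ 2.
Proof.
move=> h; rewrite -sqr_norm2 ler_pXn2r ?nnegrE ?norm2_ge0 //.
exact: le_trans (norm2_ge0 v) h.
Qed.

Lemma norm2_0 n : norm2 (0 : 'rV[R]_n) = 0.
Proof. by rewrite /norm2 big1 ?sqrtr0 // => j _; rewrite mxE expr0n. Qed.

Lemma norm2Z n c (v : 'rV[R]_n) : norm2 (c *: v) = `|c| * norm2 v.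
Proof.
rewrite /norm2 -sqrtr_sqr -sqrtrM ?sqr_ge0 // mulr_sumr.
by congr Num.sqrt; apply: eq_bigr => j _; rewrite mxE exprMn.
Qed.

(* Lagrange's argument: 2 (u_i v_i) (u_j v_j) <= (u_i v_j)^2 + (u_j v_i)^2, summed over all i, j. *)
Lemma sqr_dot_le n (u v : 'rV[R]_n) :
  (\sum_(j < n) u 0 j * v 0 j) ^+ 2 <= sumsq u * sumsq v.
Proof.
have expand (F : 'I_n -> R) (G : 'I_n -> R) :
    (\sum_i F i) * (\sum_j G j) = \sum_i \sum_j F i * G j.
  by rewrite big_distrl; apply: eq_bigr => i _; rewrite big_distrr.
rewrite expr2 /sumsq !expand -(ler_pM2l (ltr0Sn R 1)) [leRHS]mulrDl mul1r.
rewrite {1}[in leRHS]exchange_big -big_split !mulr_sumr /=.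
apply: ler_sum => i _; rewrite mulr_sumr -big_split; apply: ler_sum => j _ /=.
have := sqr_ge0 (u 0 i * v 0 j - u 0 j * v 0 i); nra.
Qed.

Lemma dot_le_norm2 n (u v : 'rV[R]_n) :
  \sum_(j < n) u 0 j * v 0 j <= norm2 u * norm2 v.
Proof.
apply: le_trans (ler_norm _) _.
by rewrite -sqrtr_sqr -sqrtrM ?sumsq_ge0 // ler_sqrt ?sqr_dot_le // mulr_ge0 ?sumsq_ge0.
Qed.

Lemma norm2D n (u v : 'rV[R]_n) : norm2 (u + v) <= norm2 u + norm2 v.
Proof.
apply: norm2_le; first by rewrite addr_ge0 ?norm2_ge0.
have -> : sumsq (u + v) = sumsq u + 2 * (\sum_(j < n) u 0 j * v 0 j) + sumsq v.
  rewrite /sumsq mulr_sumr -!big_split /=.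
  by apply: eq_bigr => j _; rewrite !mxE; ring.
have := dot_le_norm2 u v; rewrite -!sqr_norm2; nra.
Qed.

Lemma norm2B n (u v : 'rV[R]_n) : norm2 (u - v) <= norm2 u + norm2 v.
Proof. by rewrite -scaleN1r; apply: le_trans (norm2D _ _) _; rewrite norm2Z normrN1 mul1r. Qed.

Lemma norm2_sum n (I : Type) (s : seq I) (P : pred I) (F : I -> 'rV[R]_n) :
  norm2 (\sum_(i <- s | P i) F i) <= \sum_(i <- s | P i) norm2 (F i).
Proof.
elim/big_ind2: _ => [|v1 x1 v2 x2 h1 h2|//]; first by rewrite norm2_0.
exact: le_trans (norm2D _ _) (lerD h1 h2).
Qed.

End EuclideanNorm.

Section Activations.
Variable R : realType.
Implicit Types u : R.

Lemma phi_gt0 u : 0 < phi u.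
Proof.
by rewrite /phi; case: (ltP u 0) => [_|u0]; [exact: expR_gt0 | exact: ltr_wpDl u0 ltr01].
Qed.

Lemma dphi_unit u : 0 <= dphi u <= 1.
Proof.
rewrite /dphi; case: ifP => [u0|_]; last by rewrite ler01 lexx.
by rewrite expR_ge0 -expR0 ler_expR ltW.
Qed.

Lemma dphi_div_phi_unit u : 0 <= dphi u / phi u <= 1.
Proof.
have /andP[dphi0 _] := dphi_unit u.
rewrite divr_ge0 ?(ltW (phi_gt0 u)) //= ler_pdivrMr ?phi_gt0 // mul1r /dphi /phi.
by case: (ltP u 0) => // u0; rewrite lerDr.
Qed.

Lemma dsigma_unit u : 0 <= dsigma u <= 1.
Proof. by rewrite /dsigma; case: ifP; rewrite lexx ler01. Qed.

End Activations.

Section LiftedInputs.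
Variable R : realType.

(* Num.sqrt is 0 on negative arguments, so this holds even outside the unit
   ball, where quadrature points may lie. *)
Lemma sumsq_hatv n (z : 'rV[R]_n.+1) : sumsq (hatv z) <= sumsq z + 1.
Proof.
rewrite /sumsq big_ord_recr /= mxE ltnn.
rewrite (eq_bigr (fun i => z 0 i ^+ 2)) => [|i _]; last first.
  by rewrite mxE /= ltn_ord; congr (z 0 _ ^+ 2); apply: val_inj; rewrite /= inordK.
rewrite lerD2l; have [z1|z1] := leP 0 (1 - norm2 z ^+ 2).
  by rewrite sqr_sqrtr // lerBlDr lerDl sqr_ge0.
by rewrite ltr0_sqrtr // expr0n ler01.
Qed.

Lemma norm2_hatv_le2 n (z : 'rV[R]_n.+1) : sumsq z <= 3 -> norm2 (hatv z) <= 2.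
Proof. by move=> z3; apply: norm2_le => //; apply: le_trans (sumsq_hatv z) _; lra. Qed.

Lemma sumsq_prefix d (k : 'I_d) (x : 'rV[R]_d) : sumsq (Defs.prefix k x) <= sumsq x.
Proof.
rewrite /sumsq [leRHS](bigID (fun j : 'I_d => (j < k.+1)%N)) /= big_ord_narrow.
rewrite (eq_bigr (fun j => x 0 (widen_ord (ltn_ord k) j) ^+ 2)) => [|j _]; last by rewrite mxE.
by rewrite lerDl sumr_ge0 // => j _; rewrite sqr_ge0.
Qed.

Variables (k Q : nat) (x : 'rV[R]_k.+1).
Hypotheses (Q_gt0 : (0 < Q)%N) (x_le1 : sumsq x <= 1).

Lemma last_coordD1_bounds : 0 <= x 0 ord_max + 1 <= 2.
Proof.
have : `|x 0 ord_max| <= 1.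
  by apply: le_trans (abs_coord_le_norm2 _ _) _; apply: norm2_le; rewrite ?expr1n.
by rewrite ler_norml => /andP[? ?]; apply/andP; split; lra.
Qed.

Lemma Delta_ge0 : 0 <= Delta Q x.
Proof. by have /andP[? _] := last_coordD1_bounds; rewrite divr_ge0 ?ler0n. Qed.

Lemma natr_mul_Delta : Q%:R * Delta Q x = x 0 ord_max + 1.
Proof. by rewrite mulrC divfK // pnatr_eq0 -lt0n. Qed.

Lemma sumsq_quadpt j : (j <= Q)%N -> sumsq (quadpt Q x j) <= 2.
Proof.
move=> jQ; have /andP[? x2] := last_coordD1_bounds.
have jD : 0 <= j%:R * Delta Q x <= 2.
  apply/andP; split; first by rewrite mulr_ge0 ?ler0n ?Delta_ge0.
  by apply: le_trans x2; rewrite -natr_mul_Delta ler_wpM2r ?Delta_ge0 ?ler_nat.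
have init : \sum_(i < k) x 0 (widen_ord (leqnSn k) i) ^+ 2 <= 1.
  by apply: le_trans x_le1; rewrite [leRHS]big_ord_recr lerDl sqr_ge0.
rewrite /sumsq big_ord_recr /= mxE ltnn.
rewrite (eq_bigr (fun i : 'I_k => x 0 (widen_ord (leqnSn k) i) ^+ 2)) => [|i _].
  have : (-1 + j%:R * Delta Q x) ^+ 2 <= 1 by nra.
  lra.
by rewrite mxE /= ltn_ord.
Qed.

End LiftedInputs.

Section GradientBounds.
Variable R : realType.

Lemma normr_weighted_le (D p A s : R) : 0 <= D -> 0 <= p <= 1 -> 0 <= s <= 1 ->
  `|D * p * A * s| <= D * `|A|.
Proof.
move=> D0 /andP[p0 p1] /andP[s0 s1].
rewrite !normrM (ger0_norm D0) (ger0_norm p0) (ger0_norm s0).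
have -> : D * p * `|A| * s = D * `|A| * (p * s) by ring.
by rewrite ler_piMr ?mulr_ge0 // mulr_ile1.
Qed.

Lemma normr_unit_weighted_le (p A s : R) : 0 <= p <= 1 -> 0 <= s <= 1 ->
  `|p * A * s| <= `|A|.
Proof. by move=> p01 s01; have := normr_weighted_le A ler01 p01 s01; rewrite !mul1r. Qed.

Variables (k m Q : nat) (a : 'I_m -> R) (wb : 'I_m -> 'rV[R]_k.+2) (bb : 'I_m -> R).
Variables (th : block R k.+2 m) (x : 'rV[R]_k.+1) (r : 'I_m).
Hypotheses (Q_gt0 : (0 < Q)%N) (x_le1 : sumsq x <= 1).

Lemma quadrature_sum_le (B : R) (G : nat -> R) : 0 <= B ->
  (forall j, (j <= Q)%N -> G j <= Delta Q x * B) ->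
  \sum_(1 <= j < Q.+1) G j <= 2 * B.
Proof.
move=> B0 GB.
have GB' : \sum_(1 <= j < Q.+1) G j <= \sum_(1 <= j < Q.+1) Delta Q x * B.
  by apply: ler_sum_nat => j /andP[_ jQ]; exact: GB.
apply: le_trans GB' _.
rewrite sumr_const_nat subn1 /= -[_ *+ Q]mulr_natl mulrA natr_mul_Delta //.
by have /andP[_ ?] := last_coordD1_bounds x_le1; rewrite ler_wpM2r.
Qed.

Lemma gradb_le : `|gradb Q a wb bb th x r| <= 3 * `|a r|.
Proof.
rewrite /gradb (_ : 3 * _ = 2 * `|a r| + `|a r|); last by ring.
apply: le_trans (ler_normB _ _) (lerD _ _).
  apply: le_trans (ler_norm_sum _ _ _) (quadrature_sum_le _ _) => // j _.
  by apply: normr_weighted_le; rewrite ?Delta_ge0 ?dphi_unit ?dsigma_unit.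
by apply: normr_unit_weighted_le; rewrite ?dphi_div_phi_unit ?dsigma_unit.
Qed.

Lemma gradw_le : norm2 (gradw Q a wb bb th x r) <= 6 * `|a r|.
Proof.
rewrite /gradw (_ : 6 * _ = 2 * (`|a r| * 2) + `|a r| * 2); last by ring.
apply: le_trans (norm2B _ _) (lerD _ _).
  apply: le_trans (norm2_sum _ _ _) (quadrature_sum_le _ _) => // j jQ.
  rewrite norm2Z mulrA; apply: ler_pM; rewrite ?normr_ge0 ?norm2_ge0 //.
    by apply: normr_weighted_le; rewrite ?Delta_ge0 ?dphi_unit ?dsigma_unit.
  by apply: norm2_hatv_le2; have := sumsq_quadpt Q_gt0 x_le1 jQ; lra.
rewrite norm2Z; apply: ler_pM; rewrite ?normr_ge0 ?norm2_ge0 //.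
  by apply: normr_unit_weighted_le; rewrite ?dphi_div_phi_unit ?dsigma_unit.
by apply/norm2_hatv_le2/(le_trans x_le1); rewrite ler1n.
Qed.

End GradientBounds.

Section SGDOffsets.
Variables (R : realType) (d m Q : nat) (a : 'I_d -> 'I_m -> R).
Variables (wb : forall k : 'I_d, 'I_m -> 'rV[R]_k.+2) (bb : 'I_d -> 'I_m -> R).
Variables (eta : R) (xs : nat -> 'rV[R]_d).
Hypotheses (Q_gt0 : (0 < Q)%N) (eta_gt0 : 0 < eta).
Hypothesis xs_le1 : forall s, norm2 (xs s) <= 1.

Lemma sgd_offsets_le t k r :
  let th := sgd Q a wb bb eta xs t k r in
  norm2 th.1 <= eta * (6 * `|a k r|) * t%:R /\
  `|th.2| <= eta * (6 * `|a k r|) * t%:R.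
Proof.
elim: t => [|t [IHw IHb]] /=; first by rewrite norm2_0 normr0 mulr0.
have x_le1 : sumsq (Defs.prefix k (xs t)) <= 1.
  by apply: le_trans (sumsq_prefix _ _) _; rewrite -(expr1n R 2) sumsq_le.
have step : eta * (6 * `|a k r|) * t.+1%:R =
            eta * (6 * `|a k r|) * t%:R + eta * (6 * `|a k r|).
  by rewrite -natr1; ring.
rewrite step; split.
  rewrite /gradL /=; apply: le_trans (norm2B _ _) (lerD IHw _).
  by rewrite norm2Z gtr0_norm // ler_pM2l // gradw_le.
rewrite /gradL /=; apply: le_trans (ler_normB _ _) (lerD IHb _).
rewrite normrM gtr0_norm // ler_pM2l //.
apply: le_trans; first by apply: gradb_le.
by rewrite ler_wpM2r ?normr_ge0 ?ler_nat.
Qed.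

End SGDOffsets.

Section GaussianTail.
Variable R : realType.

(* Shift the mean to [s] or [-s] towards [x]: then [x^2 >= s^2 + (x -+ s)^2]. *)
Lemma normal_fun_le_shift (sig s x : R) : 0 <= s <= `|x| ->
  normal_fun 0 sig x <=
  expR (- s ^+ 2 / (sig ^+ 2 *+ 2)) * (normal_fun s sig x + normal_fun (- s) sig x).
Proof.
move=> /andP[s0 sx].
have shift c : s ^+ 2 + (x - c) ^+ 2 <= x ^+ 2 ->
    normal_fun 0 sig x <= expR (- s ^+ 2 / (sig ^+ 2 *+ 2)) * normal_fun c sig x.
  move=> hc; rewrite /normal_fun -expRD ler_expR subr0 !mulNr -opprD lerN2 -mulrDl.
  by rewrite ler_wpM2r // invr_ge0 mulrn_wge0 // sqr_ge0.
have e0 := expR_ge0 (- s ^+ 2 / (sig ^+ 2 *+ 2)).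
have := normal_fun_ge0 s sig x; have := normal_fun_ge0 (- s) sig x.
have [x0|x0] := leP 0 x.
  rewrite ger0_norm // in sx; have := shift s ltac:(nra); nra.
rewrite ltr0_norm // in sx; have := shift (- s) ltac:(nra); nra.
Qed.

Lemma normal_pdf_le_shift (sig s x : R) : sig != 0 -> 0 <= s <= `|x| ->
  normal_pdf 0 sig x <=
  expR (- s ^+ 2 / (sig ^+ 2 *+ 2)) * (normal_pdf s sig x + normal_pdf (- s) sig x).
Proof.
move=> sig0 sx; rewrite !normal_pdfE //= -mulrDr mulrCA.
by apply: ler_wpM2l; [exact: normal_peak_ge0 | exact: normal_fun_le_shift].
Qed.

Lemma normal_tail_le (sig s : R) : 0 < sig -> 0 <= s ->
  (normal_prob 0 sig (~` `[(- s)%R, s]) <=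
   (2 * expR (- s ^+ 2 / (sig ^+ 2 *+ 2)))%:E)%E.
Proof.
move=> sig0 s0; set q := expR _; set A := ~` _.
have mA : measurable A by apply: measurableC.
have mpdf c : measurable_fun A (fun x => (q * normal_pdf c sig x)%:E).
  by apply/measurable_EFinP/measurable_funM => //; apply: measurable_funTS;
    exact: measurable_normal_pdf.
have pdf_ge0 c x : (0 <= (q * normal_pdf c sig x)%:E)%E.
  by rewrite lee_fin mulr_ge0 ?expR_ge0 ?normal_pdf_ge0.
have scaled_le c : (\int[lebesgue_measure]_(x in A) (q * normal_pdf c sig x)%:E <= q%:E)%E.
  under eq_integral do rewrite EFinM.
  rewrite ge0_integralZl //.
  - rewrite -[leRHS]mule1 lee_wpmul2l ?lee_fin ?expR_ge0 //.
    exact: (probability_le1 (normal_prob c sig) mA).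
  - by apply/measurable_EFinP; apply: measurable_funTS; exact: measurable_normal_pdf.
  - by move=> x _; rewrite lee_fin normal_pdf_ge0.
  - by rewrite lee_fin expR_ge0.
rewrite /normal_prob; apply: le_trans (_ : (_ <= \int[lebesgue_measure]_(x in A)
  ((q * normal_pdf s sig x)%:E + (q * normal_pdf (- s) sig x)%:E))%E) _.
  apply: ge0_le_integral => //.
  - by move=> x _; rewrite lee_fin normal_pdf_ge0.
  - by apply/measurable_EFinP; apply: measurable_funTS; exact: measurable_normal_pdf.
  - by apply: emeasurable_funD; exact: mpdf.
  move=> x Ax; rewrite -EFinD lee_fin -mulrDr normal_pdf_le_shift ?gt_eqF // s0 /=.
  by rewrite leNgt; apply: contra_notN Ax; rewrite ltr_norml /= in_itv /= => /andP[? ?]; rewrite !ltW.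
rewrite ge0_integralD //; [|exact: mpdf..].
apply: le_trans (leeD (scaled_le s) (scaled_le (- s))) _.
by rewrite -EFinD lee_fin; lra.
Qed.

End GaussianTail.

Section GaussianInterval.
Context {R : realType} {dsp : measure_display} {T : measurableType dsp}.

Lemma gaussian0_interval_ge (P : probability T R) (Y : T -> R) (sig s : R) :
  0 < sig -> 0 <= s -> gaussian0 P Y (sig ^+ 2) ->
  measurable (Y @^-1` `[(- s)%R, s]) /\
  ((1 - 2 * expR (- s ^+ 2 / (sig ^+ 2 *+ 2)))%:E <= P (Y @^-1` `[(- s)%R, s]))%E.
Proof.
move=> sig0 s0 [mY PY].
have mI : measurable `[(- s)%R, s] by exact: measurable_itv.
split; first by have := mY measurableT _ mI; rewrite setTI.
rewrite PY // sqrtr_sqr gtr0_norm // -[X in normal_prob _ _ X]setCK.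
rewrite probability_setC; last exact: measurableC.
by rewrite EFinB leeB // normal_tail_le.
Qed.

End GaussianInterval.

Lemma ln_nat_ge_half (R : realType) (m : nat) : (2 <= m)%N -> 1 / 2 <= ln (m%:R : R).
Proof.
move=> m2; have m0 : (0 : R) < m%:R by rewrite ltr0n (leq_trans _ m2).
have := expR_ge1Dx (- ln (m%:R : R)); rewrite expRN lnK ?posrE //.
have : (m%:R : R)^-1 <= 2^-1 by rewrite lef_pV2 ?posrE ?ler_nat.
lra.
Qed.

(* At [s = c1 eps sqrt (2 ln m)] the tail bound is [2 m^(-c1^2)]. *)
Lemma normal_tail_sqrt_log_le (R : realType) (m : nat) (c1 eps : R) :
  (2 <= m)%N -> 10 <= c1 -> 0 < eps ->
  2 * expR (- (c1 * eps * Num.sqrt (2 * ln (m%:R : R))) ^+ 2 / (eps ^+ 2 *+ 2))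
  <= c1^-1.
Proof.
move=> m2 c1_ge10 eps0; have lnm := ln_nat_ge_half R m2.
rewrite mulNr (_ : _ / _ = c1 ^+ 2 * ln (m%:R : R)); last first.
  rewrite exprMn sqr_sqrtr; last by lra.
  by rewrite -mulr_natr; field; rewrite gt_eqF // exprn_gt0.
have c1_gt0 : 0 < c1 by lra.
rewrite expRN -[leRHS]div1r ler_pdivlMr // mulrAC ler_pdivrMr ?expR_gt0 // mul1r.
apply: le_trans (expR_ge1Dx _).
have : c1 ^+ 2 / 2 <= c1 ^+ 2 * ln (m%:R : R) by rewrite ler_pM2l ?exprn_gt0 //; lra.
nra.
Qed.

Theorem lemma1 (R : realType) (dsp : measure_display) (T : measurableType dsp)
    (P : probability T R) (d m Q : nat) (eps_a : R)
    (X : init_idx d m -> T -> R) :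
  (2 <= m)%N -> 0 < eps_a -> (1 <= Q)%N ->
  mutually_independent P X ->
  (forall k r, gaussian0 P (X (IA k r)) (eps_a ^+ 2)) ->
  (forall k r j, gaussian0 P (X (IW k r j)) (m%:R^-1)) ->
  (forall k r, gaussian0 P (X (IB k r)) (m%:R^-1)) ->
  forall (k : 'I_d) (r : 'I_m) (c1 : R), 10 <= c1 ->
  forall x : 'rV[R]_k.+1, norm2 x <= 1 / 2 ->
  forall (eta : R), 0 < eta ->
  forall (xs : nat -> 'rV[R]_d), (forall s, norm2 (xs s) <= 1) ->
  forall t : nat,
  let Lambda := 6 * c1 * eps_a * Num.sqrt (2 * ln m%:R) in
  exists E : set T, measurable E /\ ((1 - c1^-1)%:E <= P E)%E /\
    forall w, E w ->
      let th := sgd Q (init_a X w) (init_w X w) (init_b X w) eta xs t in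
      norm2 (th k r).1 <= eta * Lambda * t%:R /\
      `|(th k r).2| <= eta * Lambda * t%:R.
Proof.
move=> m_ge2 eps_gt0 Q_gt0 _ gauss_a _ _ k r c1 c1_ge10 _ _ eta eta_gt0 xs xs_le1 t Lambda.
set s := c1 * eps_a * Num.sqrt (2 * ln m%:R).
have s_ge0 : 0 <= s by rewrite !mulr_ge0 ?sqrtr_ge0 //; lra.
have [mE PE] := gaussian0_interval_ge eps_gt0 s_ge0 (gauss_a k r).
exists (X (IA k r) @^-1` `[(- s)%R, s]); split => //; split.
  apply: le_trans PE; rewrite lee_fin lerD2l lerN2.
  exact: normal_tail_sqrt_log_le.
move=> w; rewrite /= in_itv /= -ler_norml => a_le_s.
have [w_le b_le] := sgd_offsets_le (init_a X w) (init_w X w) (init_b X w) Q_gt0 eta_gt0 xs_le1 t k r.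
have rate : eta * (6 * `|init_a X w k r|) * t%:R <= eta * Lambda * t%:R.
  have -> : Lambda = 6 * s by rewrite /Lambda /s; ring.
  by rewrite ler_wpM2r // ler_pM2l // ler_pM2l.
by split; apply: le_trans rate.
Qed.
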